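(* Let $m>n>0$ and $c>0$ be constants. Let $f,g\in C(\mathbb{R}_0^+,\mathbb{R}_0^+)$, let $w\in C(\mathbb{R}_0^+,\mathbb{R}_0^+)$ be nondecreasing with $w(x)>0$ for $x>0$, and let $\alpha\in C^1(\mathbb{R}_0^+,\mathbb{R}_0^+)$ be nondecreasing with $\alpha(t)\le t$. If $u\in C(\mathbb{R}_0^+,\mathbb{R}_0^+)$ satisfies $$u^m(t)\le c^{m/(m-n)}+\frac{m}{m-n}\int_0^{\alpha(t)}\big[f(s)u^n(s)w(u(s))+g(s)u^n(s)\big]\,ds\qquad\text{for all }t\ge0,$$ then there exists $\tau>0$ such that for all $t\in[0,\tau]$, $$\Psi\Big(c+\int_0^{\alpha(t)}g(s)\,ds\Big)+\int_0^{\alpha(t)}f(s)\,ds\in\mathrm{Dom}(\Psi^{-1})$$ and $$u(t)\le\Big\{\Psi^{-1}\Big[\Psi\Big(c+\int_0^{\alpha(t)}g(s)\,ds\Big)+\int_0^{\alpha(t)}f(s)\,ds\Big]\Big\}^{1/(m-n)},$$ where $\Psi(x)=\int_1^x\frac{ds}{w(s^{1/(m-n)})}$ for $x>0$.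
   Context: $\mathbb{R}_0^+=[0,\infty)$. $\Psi$ is strictly increasing on $(0,\infty)$, $\Psi^{-1}$ denotes its inverse, and $\mathrm{Dom}(\Psi^{-1})=\Psi((0,\infty))$. *)

From Stdlib Require Import Reals Lra ClassicalEpsilon.
Open Scope R_scope.

(* Real power with the convention 0^a = 0 (used for a > 0 only);
   Stdlib's Rpower 0 a = 1 would be wrong at 0. *)
Definition rpow (x a : R) : R := if Req_EM_T x 0 then 0 else Rpower x a.

(* Riemann integral of f over [a,b] (oriented); 0 if not integrable.
   The value of RiemannInt does not depend on the integrability proof. *)
Definition Rint (f : R -> R) (a b : R) : R :=
  match excluded_middle_informative (inhabited (Riemann_integrable f a b)) with
  | left H => RiemannInt (epsilon H (fun _ => True))
  | right _ => 0
  end.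

Definition nonneg (x : R) : Prop := 0 <= x.

(* f in C(R_0^+, R_0^+): continuous on [0,oo) (one-sided at 0), nonnegative values. *)
Definition C_nonneg (f : R -> R) : Prop :=
  (forall x, 0 <= x -> continue_in f nonneg x) /\ (forall x, 0 <= x -> 0 <= f x).

Definition nondecreasing_nonneg (f : R -> R) : Prop :=
  forall x y, 0 <= x -> x <= y -> f x <= f y.

(* alpha in C^1(R_0^+, R_0^+): derivative (one-sided at 0) exists on [0,oo)
   and is continuous there, values nonnegative. *)
Definition C1_nonneg (f : R -> R) : Prop :=
  C_nonneg f /\
  exists f' : R -> R,
    (forall x, 0 <= x -> continue_in f' nonneg x) /\
    (forall x, 0 <= x ->
       limit1_in (fun h => (f (x + h) - f x) / h)
                 (fun h => h <> 0 /\ 0 <= x + h) (f' x) 0).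

Definition Psi (m n : R) (w : R -> R) (x : R) : R :=
  Rint (fun s => / w (rpow s (1 / (m - n)))) 1 x.

Definition PsiDom (m n : R) (w : R -> R) (v : R) : Prop :=
  exists y, 0 < y /\ Psi m n w y = v.

(* Psi^{-1}(v): the (unique, Psi being strictly increasing) y > 0 with Psi y = v. *)
Definition Psi_inv (m n : R) (w : R -> R) (v : R) : R :=
  epsilon (inhabits 0) (fun y => 0 < y /\ Psi m n w y = v).

From Pilot Require Import Defs.
From Stdlib Require Import Reals Lra ClassicalEpsilon Ranalysis5.
Open Scope R_scope.

(** Let [Z t] be the right-hand side evaluated at [t] instead of [alpha t].
    Since [alpha t <= t] and the integrand is nonnegative, [u^m <= Z] on
    [[0,oo)].  Put [V = Z^((m-n)/m)], so [V 0 = c] and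
    [V' = Z^(-n/m) (f u^n w(u) + g u^n) <= f w(V^(1/(m-n))) + g] because
    [u <= Z^(1/m) = V^(1/(m-n))] and [w] is nondecreasing.  A comparison
    argument ([x |-> Psi (V x + G X - G x) - F x] is nonincreasing, with
    [F, G] the primitives of [f, g]) gives
    [Psi (V X) <= Psi (c + G X) + F X].  Finally [tau] is chosen so small
    that [G (alpha t) < 1] and [F (alpha t) < Psi (c+2) - Psi (c+1)]; by the
    intermediate value theorem the right-hand side is then a value of [Psi],
    and applying [Psi_inv] yields the bound on [u t]. *)

Lemma Rint_RiemannInt {f : R -> R} {a b : R} (pr : Riemann_integrable f a b) :
  Rint f a b = RiemannInt pr.
Proof.
  unfold Rint. destruct (excluded_middle_informative _) as [H|H].
  - apply RiemannInt_P5.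
  - exfalso; exact (H (inhabits pr)).
Qed.

Lemma Riemann_integrable_continuous (f : R -> R) (a b : R) :
  (forall z, Rmin a b <= z <= Rmax a b -> continuity_pt f z) ->
  Riemann_integrable f a b.
Proof.
  intros H. destruct (Rle_dec a b) as [Hab|Hab].
  - apply continuity_implies_RiemannInt; auto.
    intros z Hz; apply H. rewrite Rmin_left, Rmax_right; auto.
  - apply RiemannInt_P1, continuity_implies_RiemannInt; [lra|].
    intros z Hz; apply H. rewrite Rmin_right, Rmax_left; lra.
Qed.

Lemma Rint_zero_length (g : R -> R) : continuity g -> Rint g 0 0 = 0.
Proof.
  intros Hg.
  assert (pr : Riemann_integrable g 0 0)
    by (apply continuity_implies_RiemannInt; [lra|auto]).
  rewrite (Rint_RiemannInt pr). apply RiemannInt_P9.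
Qed.

Lemma Rint_eq_on (f g : R -> R) (x : R) : 0 <= x ->
  (forall s, 0 <= s <= x -> f s = g s) -> continuity g -> Rint f 0 x = Rint g 0 x.
Proof.
  intros Hx Heq Hg.
  assert (pg : Riemann_integrable g 0 x) by (apply continuity_implies_RiemannInt; auto).
  assert (pf : Riemann_integrable f 0 x).
  { apply Riemann_integrable_ext with g; auto. intros s Hs. symmetry; apply Heq.
    rewrite Rmin_left, Rmax_right in Hs; auto. }
  rewrite (Rint_RiemannInt pf), (Rint_RiemannInt pg).
  apply RiemannInt_P18; auto. intros s Hs; apply Heq; lra.
Qed.

Lemma Rint_derivable_local (f : R -> R) (a b c x : R) : a < b ->
  (forall z, a <= z <= b -> continuity_pt f z) ->
  a <= c <= b -> a < x < b -> derivable_pt_lim (fun z => Rint f c z) x (f x).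
Proof.
  intros Hab Cf [Hac Hcb] Hx.
  assert (h : a <= b) by lra.
  set (P := primitive h (FTC_P1 h Cf)).
  assert (HP : forall z (Hz1 : a <= z) (Hz2 : z <= b),
             P z = RiemannInt (FTC_P1 h Cf Hz1 Hz2)).
  { intros z Hz1 Hz2. unfold P, primitive.
    destruct (Rle_dec a z); [|contradiction]. destruct (Rle_dec z b); [|contradiction].
    apply RiemannInt_P5. }
  apply derivable_pt_lim_locally_ext with (f := fun z => P z - P c) (a := a) (b := b); auto.
  - intros y [Hay Hyb].
    assert (Hcy : Riemann_integrable f c y).
    { apply Riemann_integrable_continuous. intros z [Hz1 Hz2]. apply Cf. split.
      - apply Rle_trans with (Rmin c y); auto. apply Rmin_glb; lra.
      - apply Rle_trans with (Rmax c y); auto. apply Rmax_lub; lra. }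
    assert (Hca : Riemann_integrable f c a) by (apply RiemannInt_P1, (FTC_P1 h Cf); lra).
    rewrite (Rint_RiemannInt Hcy),
      <- (RiemannInt_P26 Hca (FTC_P1 h Cf (Rlt_le _ _ Hay) (Rlt_le _ _ Hyb)) Hcy),
      (HP y (Rlt_le _ _ Hay) (Rlt_le _ _ Hyb)), (HP c Hac Hcb),
      (RiemannInt_P8 Hca (FTC_P1 h Cf Hac Hcb)).
    ring.
  - replace (f x) with (f x - 0) by ring.
    apply (derivable_pt_lim_minus P (fun _ => P c)).
    + apply RiemannInt_P28; lra.
    + apply derivable_pt_lim_const.
Qed.

Lemma Rint_derivable (g : R -> R) (x : R) :
  continuity g -> derivable_pt_lim (fun z => Rint g 0 z) x (g x).
Proof.
  intros Hg.
  assert (H1 := Rmin_l 0 x); assert (H2 := Rmax_l 0 x);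
  assert (H3 := Rmin_r 0 x); assert (H4 := Rmax_r 0 x).
  apply Rint_derivable_local with (a := Rmin 0 x - 1) (b := Rmax 0 x + 1);
    try lra; intros; apply Hg.
Qed.

Lemma derivable_pt_lim_continuity_pt (f : R -> R) (x l : R) :
  derivable_pt_lim f x l -> continuity_pt f x.
Proof. intros H. exact (derivable_continuous_pt f x (exist _ l H)). Qed.

Lemma nondecreasing_of_deriv (F F' : R -> R) (a b : R) : a <= b ->
  (forall z, a <= z <= b -> derivable_pt_lim F z (F' z)) ->
  (forall z, a <= z <= b -> 0 <= F' z) -> F a <= F b.
Proof.
  intros Hab HD HF. destruct (Req_dec a b) as [->|Hne]; [lra|].
  destruct (MVT_cor2 F F' a b) as [z [Hz1 Hz2]]; [lra|auto|].
  assert (0 <= F' z) by (apply HF; lra). nra.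
Qed.

Lemma nonincreasing_of_deriv (F F' : R -> R) (a b : R) : a <= b ->
  (forall z, a <= z <= b -> derivable_pt_lim F z (F' z)) ->
  (forall z, a <= z <= b -> F' z <= 0) -> F b <= F a.
Proof.
  intros Hab HD HF.
  enough (- F a <= - F b) by lra.
  apply (nondecreasing_of_deriv (fun z => - F z) (fun z => - F' z)); auto.
  - intros z Hz. apply derivable_pt_lim_opp, HD; auto.
  - intros z Hz. specialize (HF z Hz). lra.
Qed.

Lemma increasing_of_deriv_pos (F F' : R -> R) (a b : R) : a < b ->
  (forall z, a <= z <= b -> derivable_pt_lim F z (F' z)) ->
  (forall z, a <= z <= b -> 0 < F' z) -> F a < F b.
Proof.
  intros Hab HD HF.
  destruct (MVT_cor2 F F' a b) as [z [Hz1 Hz2]]; [lra|auto|].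
  assert (0 < F' z) by (apply HF; lra). nra.
Qed.

(** * Functions on the half-line

    A function given on [[0,oo)] is extended to [R] by [ext0 h x = h (max 0 x)];
    continuity on [[0,oo)] (one-sided at [0]) becomes continuity on [R], so the
    calculus lemmas above apply to the extension. *)
Definition ext0 (h : R -> R) (x : R) : R := h (Rmax 0 x).

Lemma continuity_ext0 (h : R -> R) :
  (forall x, 0 <= x -> continue_in h Defs.nonneg x) -> continuity (ext0 h).
Proof.
  intros H x0 eps Heps. unfold ext0.
  destruct (H _ (Rmax_l 0 x0) eps Heps) as [d [Hd Hd2]].
  exists d. split; auto. intros y [_ Hy]. simpl in *; unfold R_dist in *.
  assert (Hm : Rabs (Rmax 0 y - Rmax 0 x0) <= Rabs (y - x0)).
  { unfold Rmax; destruct (Rle_dec 0 y); destruct (Rle_dec 0 x0);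
    unfold Rabs; repeat destruct Rcase_abs; lra. }
  destruct (Req_dec (Rmax 0 y) (Rmax 0 x0)) as [He|Hne].
  - rewrite He, Rminus_diag, Rabs_R0. lra.
  - apply Hd2. split; [split|].
    + apply Rmax_l.
    + intro E; apply Hne; auto.
    + simpl; unfold R_dist; lra.
Qed.

Lemma ext0_nonneg (h : R -> R) (x : R) : 0 <= x -> ext0 h x = h x.
Proof. intros Hx. unfold ext0. rewrite Rmax_right; auto. Qed.

Lemma continuity_pt_pos (h : R -> R) (z : R) :
  (forall x, 0 <= x -> continue_in h Defs.nonneg x) -> 0 < z -> continuity_pt h z.
Proof.
  intros Hh Hz.
  apply continuity_pt_locally_ext with (f := ext0 h) (a := z).
  - exact Hz.
  - intros y Hy. unfold Rdist, Rabs in Hy. destruct Rcase_abs in Hy;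
      apply ext0_nonneg; lra.
  - apply continuity_ext0; auto.
Qed.

Lemma Rint_ext0 (h : R -> R) (x : R) :
  (forall y, 0 <= y -> continue_in h Defs.nonneg y) -> 0 <= x ->
  Rint h 0 x = Rint (ext0 h) 0 x.
Proof.
  intros Hh Hx. apply Rint_eq_on; auto.
  - intros s Hs. symmetry; apply ext0_nonneg; lra.
  - apply continuity_ext0; auto.
Qed.

Lemma Rint_small_near_zero (h : R -> R) (eps : R) :
  (forall x, 0 <= x -> continue_in h Defs.nonneg x) -> (forall x, 0 <= x -> 0 <= h x) ->
  0 < eps -> exists d, 0 < d /\ forall x, 0 <= x <= d -> 0 <= Rint h 0 x < eps.
Proof.
  intros Hc H0 Heps.
  set (H := fun x => Rint (ext0 h) 0 x).
  assert (Cext : continuity (ext0 h)) by (apply continuity_ext0; auto).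
  assert (DH : forall x, derivable_pt_lim H x (ext0 h x))
    by (intros; apply Rint_derivable; auto).
  assert (H00 : H 0 = 0) by (apply Rint_zero_length; auto).
  destruct (derivable_pt_lim_continuity_pt _ _ _ (DH 0) eps Heps) as [d [Hd Hclose]].
  exists (d / 2). split; [lra|]. intros x Hx.
  rewrite (Rint_ext0 h x Hc) by lra. fold (H x).
  assert (Hmono : H 0 <= H x).
  { apply (nondecreasing_of_deriv H (ext0 h)); try lra; intros z Hz; auto.
    unfold ext0; apply H0, Rmax_l. }
  destruct (Req_dec x 0) as [->|Hx0]; [lra|].
  assert (Hd2 : R_dist (H x) (H 0) < eps).
  { apply Hclose. split; [split; [exact I | auto]|].
    simpl; unfold R_dist. rewrite Rminus_0_r, Rabs_right; lra. }
  unfold R_dist in Hd2. rewrite H00, Rminus_0_r in *.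
  unfold Rabs in Hd2; destruct Rcase_abs in Hd2; lra.
Qed.

(** * Real powers with [0^p = 0] *)

Lemma Rpower_gt0 (x a : R) : 0 < Rpower x a.
Proof. apply exp_pos. Qed.

Lemma rpow_pos (x a : R) : 0 < x -> rpow x a = Rpower x a.
Proof. intros H. unfold rpow. destruct (Req_EM_T x 0); [lra|auto]. Qed.

Lemma rpow_zero (a : R) : rpow 0 a = 0.
Proof. unfold rpow. destruct (Req_EM_T 0 0); [auto|lra]. Qed.

Lemma rpow_nonneg (x a : R) : 0 <= rpow x a.
Proof. unfold rpow. destruct (Req_EM_T x 0); [lra|]. left; apply Rpower_gt0. Qed.

Lemma rpow_gt0 (x a : R) : 0 < x -> 0 < rpow x a.
Proof. intros H; rewrite rpow_pos; auto; apply Rpower_gt0. Qed.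

Lemma rpow_le_compat (x y p : R) : 0 <= x <= y -> 0 <= p -> rpow x p <= rpow y p.
Proof.
  intros [Hx Hxy] Hp. destruct (Req_dec x 0) as [->|Hx0].
  - rewrite rpow_zero. apply rpow_nonneg.
  - rewrite !rpow_pos by lra. apply Rle_Rpower_l; lra.
Qed.

Lemma rpow_root_bound (U M Z : R) :
  0 < M -> 0 <= U -> 0 < Z -> rpow U M <= Z -> U <= Rpower Z (1 / M).
Proof.
  intros HM HU HZ H. destruct (Req_dec U 0) as [->|HU0].
  - left; apply Rpower_gt0.
  - rewrite rpow_pos in H by lra.
    assert (H2 : Rpower (Rpower U M) (1/M) <= Rpower Z (1/M)).
    { apply Rle_Rpower_l; [left; apply Rdiv_lt_0_compat; lra|].
      split; auto. apply Rpower_gt0. }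
    rewrite Rpower_mult in H2. replace (M * (1/M)) with 1 in H2 by (field; lra).
    rewrite Rpower_1 in H2; lra.
Qed.

Lemma Rpower_Rpower_exp (Z a b p : R) : a * b = p -> Rpower (Rpower Z a) b = Rpower Z p.
Proof. intros <-. apply Rpower_mult. Qed.

Lemma continuity_pt_rpow (x a : R) : 0 < x -> continuity_pt (fun y => rpow y a) x.
Proof.
  intros H.
  apply continuity_pt_locally_ext with (f := fun y => Rpower y a) (a := x); auto.
  - intros y Hy. symmetry. apply rpow_pos.
    unfold Rdist, Rabs in Hy. destruct Rcase_abs in Hy; lra.
  - eapply derivable_pt_lim_continuity_pt. apply derivable_pt_lim_power; auto.
Qed.

Lemma rpow_continue_in (n : R) : 0 < n ->
  forall x, 0 <= x -> continue_in (fun y => rpow y n) Defs.nonneg x.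
Proof.
  intros Hn x Hx eps Heps. destruct (Req_dec x 0) as [->|Hx0].
  - exists (Rpower eps (1 / n)). split; [apply Rpower_gt0|].
    intros y [[Hy0 _] Hy]. simpl in *; unfold R_dist in *. unfold Defs.nonneg in Hy0.
    rewrite rpow_zero, Rminus_0_r in *. rewrite Rabs_right in * by (auto using rpow_nonneg, Rle_ge).
    destruct (Req_dec y 0) as [->|Hy1]; [rewrite rpow_zero; lra|].
    rewrite rpow_pos by lra.
    apply Rlt_le_trans with (Rpower (Rpower eps (1/n)) n).
    + apply Rlt_Rpower_l; lra.
    + right. rewrite (Rpower_Rpower_exp _ _ _ 1) by (field; lra). apply Rpower_1; lra.
  - destruct (continuity_pt_rpow x n ltac:(lra) eps Heps) as [d [Hd Hclose]].
    exists d. split; auto. intros y [[_ Hy] Hd']. apply Hclose. split; [split; [exact I|]|]; auto.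
Qed.

(** * The function [Psi] *)

Section PsiTheory.
Variables (m n : R) (w : R -> R).
Hypothesis Hwc : forall x, 0 <= x -> continue_in w Defs.nonneg x.
Hypothesis Hwpos : forall x, 0 < x -> w x > 0.

Definition Psi_density (s : R) : R := / w (rpow s (1 / (m - n))).

Lemma Psi_density_pos (s : R) : 0 < s -> 0 < Psi_density s.
Proof. intros Hs. apply Rinv_0_lt_compat, Hwpos, rpow_gt0; lra. Qed.

Lemma Psi_density_continuous (s : R) : 0 < s -> continuity_pt Psi_density s.
Proof.
  intros Hs.
  assert (Hr : 0 < rpow s (1 / (m - n))) by (apply rpow_gt0; lra).
  apply continuity_pt_inv.
  - exact (continuity_pt_comp _ w s (continuity_pt_rpow s _ Hs) (continuity_pt_pos w _ Hwc Hr)).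
  - apply Rgt_not_eq, Hwpos, Hr.
Qed.

Lemma Psi_derivable (y : R) : 0 < y -> derivable_pt_lim (Psi m n w) y (Psi_density y).
Proof.
  intros Hy. unfold Psi.
  assert (H1 := Rmin_l 1 y); assert (H2 := Rmin_r 1 y);
  assert (H3 := Rmax_l 1 y); assert (H4 := Rmax_r 1 y).
  assert (H5 : 0 < Rmin 1 y) by (apply Rmin_pos; lra).
  apply (Rint_derivable_local Psi_density (Rmin 1 y / 2) (Rmax 1 y + 1)); try lra.
  intros z Hz; apply Psi_density_continuous; lra.
Qed.

Lemma Psi_strict (a b : R) : 0 < a -> a < b -> Psi m n w a < Psi m n w b.
Proof.
  intros Ha Hab. apply (increasing_of_deriv_pos _ Psi_density); auto.
  - intros z Hz; apply Psi_derivable; lra.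
  - intros z Hz; apply Psi_density_pos; lra.
Qed.

Lemma Psi_le (a b : R) : 0 < a -> a <= b -> Psi m n w a <= Psi m n w b.
Proof.
  intros Ha Hab. destruct (Req_dec a b) as [->|Hne]; [lra|].
  left; apply Psi_strict; lra.
Qed.

(** Values slightly above [Psi a] are still in the range of [Psi] (intermediate
    value theorem): this is where [tau] has to be small. *)
Lemma PsiDom_of_gap (a b d : R) : 0 < a <= b -> 0 <= d < Psi m n w b - Psi m n w a ->
  PsiDom m n w (Psi m n w a + d).
Proof.
  intros [Ha Hab] Hd. destruct (Req_dec d 0) as [->|Hd0].
  - exists a. split; [auto|ring].
  - assert (Hlt : a < b).
    { destruct (Req_dec a b) as [->|]; lra. }
    destruct (IVT_interv (fun y => Psi m n w y - (Psi m n w a + d)) a b) as [z [Hz1 Hz2]];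
      try lra.
    + intros y Hy. apply (continuity_pt_minus (Psi m n w) (fun _ => Psi m n w a + d)).
      * eapply derivable_pt_lim_continuity_pt, Psi_derivable; lra.
      * apply continuity_pt_const. intros ? ?; auto.
    + exists z. split; lra.
Qed.

Lemma Psi_inv_spec (v : R) :
  PsiDom m n w v -> 0 < Psi_inv m n w v /\ Psi m n w (Psi_inv m n w v) = v.
Proof. intros H. unfold Psi_inv. apply epsilon_spec. exact H. Qed.

Lemma Psi_inv_ge (a v : R) : 0 < a -> PsiDom m n w v -> Psi m n w a <= v ->
  a <= Psi_inv m n w v.
Proof.
  intros Ha Hv Hle. destruct (Psi_inv_spec v Hv) as [Hpos Heq].
  destruct (Rle_lt_dec a (Psi_inv m n w v)) as [|Hlt]; auto.
  assert (H := Psi_strict _ _ Hpos Hlt). lra.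
Qed.

Hypotheses (Hmn : n < m) (Hwmono : nondecreasing_nonneg w).

(** Proof: [x |-> Psi (V x + G b - G x) - F x] is nonincreasing, since
    [V + G b - G >= V] and [w] is nondecreasing. *)
Lemma Psi_comparison (V V' F f G g : R -> R) (a b : R) : a <= b ->
  (forall x, a <= x <= b -> derivable_pt_lim V x (V' x)) ->
  (forall x, a <= x <= b -> derivable_pt_lim F x (f x)) ->
  (forall x, a <= x <= b -> derivable_pt_lim G x (g x)) ->
  (forall x, a <= x <= b -> 0 < V x) ->
  (forall x, a <= x <= b -> 0 <= f x) ->
  (forall x, a <= x <= b -> 0 <= g x) ->
  (forall x, a <= x <= b -> V' x <= f x * w (rpow (V x) (1 / (m - n))) + g x) ->
  Psi m n w (V b) <= Psi m n w (V a + (G b - G a)) + (F b - F a).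
Proof.
  intros Hab DV DF DG HV Hf Hg HV'.
  set (Y := fun x => V x + (G b - G x)).
  assert (HVY : forall x, a <= x <= b -> V x <= Y x).
  { intros x Hx. unfold Y.
    enough (G x <= G b) by lra.
    apply (nondecreasing_of_deriv G g); try lra; intros z Hz; [apply DG|apply Hg]; lra. }
  assert (Dphi : forall x, a <= x <= b -> derivable_pt_lim (fun x => Psi m n w (Y x) - F x) x
                   (Psi_density (Y x) * (V' x - g x) - f x)).
  { intros x Hx. apply derivable_pt_lim_minus; [|apply DF; auto].
    apply (derivable_pt_lim_comp Y (Psi m n w)).
    - replace (V' x - g x) with (V' x + (0 - g x)) by ring.
      apply derivable_pt_lim_plus; [apply DV; auto|].
      apply derivable_pt_lim_minus; [apply derivable_pt_lim_const | apply DG; auto].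
    - apply Psi_derivable. specialize (HV x Hx); specialize (HVY x Hx); lra. }
  assert (Hneg : forall x, a <= x <= b -> Psi_density (Y x) * (V' x - g x) - f x <= 0).
  { intros x Hx. unfold Psi_density.
    specialize (HV x Hx). specialize (HVY x Hx). specialize (Hf x Hx).
    set (p := 1 / (m - n)).
    assert (Hp : 0 <= p) by (unfold p; left; apply Rdiv_lt_0_compat; lra).
    assert (HwY : 0 < w (rpow (Y x) p)) by (apply Hwpos, rpow_gt0; lra).
    assert (HwVY : w (rpow (V x) p) <= w (rpow (Y x) p))
      by (apply Hwmono; [apply rpow_nonneg | apply rpow_le_compat; lra]).
    assert (Hslope : V' x - g x <= f x * w (rpow (Y x) p)).
    { specialize (HV' x Hx). fold p in HV'. nra. }
    apply Rmult_le_compat_l with (r := / w (rpow (Y x) p)) in Hslope;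
      [|left; apply Rinv_0_lt_compat; auto].
    replace (/ w (rpow (Y x) p) * (f x * w (rpow (Y x) p))) with (f x) in Hslope
      by (field; lra).
    lra. }
  assert (H := nonincreasing_of_deriv _ _ a b Hab Dphi Hneg).
  unfold Y in H. replace (V b + (G b - G b)) with (V b) in H by ring. lra.
Qed.

End PsiTheory.

(** * The comparison argument for Corollary 1 *)

Lemma rpow_power_root (m n Z : R) : 0 < n < m -> 0 < Z ->
  rpow (Rpower Z ((m - n) / m)) (1 / (m - n)) = Rpower Z (1 / m).
Proof.
  intros Hnm HZ. rewrite rpow_pos by apply Rpower_gt0.
  apply Rpower_Rpower_exp. field; lra.
Qed.

Lemma power_kernel_bound (m n : R) (w : R -> R) (Z U a b : R) :
  0 < n < m -> nondecreasing_nonneg w -> (forall x, 0 <= x -> 0 <= w x) ->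
  0 < Z -> 0 <= U <= Rpower Z (1 / m) -> 0 <= a -> 0 <= b ->
  Rpower Z (- (n / m)) * (a * rpow U n * w U + b * rpow U n)
    <= a * w (Rpower Z (1 / m)) + b.
Proof.
  intros Hnm Hwmono Hw0 HZ HU Ha Hb.
  set (Q := Rpower Z (n / m)). set (W := w (Rpower Z (1 / m))).
  assert (HUn : rpow U n <= Q).
  { apply Rle_trans with (rpow (Rpower Z (1 / m)) n).
    - apply rpow_le_compat; lra.
    - right. rewrite rpow_pos by apply Rpower_gt0.
      apply Rpower_Rpower_exp. field; lra. }
  assert (HwU : w U <= W) by (apply Hwmono; lra).
  assert (HwU0 : 0 <= w U) by (apply Hw0; lra).
  assert (HUn0 : 0 <= rpow U n) by apply rpow_nonneg.
  assert (Hkernel : a * rpow U n * w U + b * rpow U n <= Q * (a * W + b)).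
  { assert (a * rpow U n * w U <= a * Q * W).
    { apply Rmult_le_compat; try apply Rmult_le_compat_l; auto; apply Rmult_le_pos; auto. }
    assert (b * rpow U n <= b * Q) by (apply Rmult_le_compat_l; auto).
    nra. }
  assert (HEQ : Rpower Z (- (n / m)) * Q = 1).
  { unfold Q. rewrite <- Rpower_plus, Rplus_opp_l. apply Rpower_O; auto. }
  apply Rmult_le_compat_l with (r := Rpower Z (- (n / m))) in Hkernel;
    [|left; apply Rpower_gt0].
  rewrite <- Rmult_assoc, HEQ, Rmult_1_l in Hkernel. exact Hkernel.
Qed.

Section Corollary.
Variables (m n c : R) (f g w alpha u : R -> R).
Hypotheses (Hmn : n < m) (Hn : 0 < n) (Hc : 0 < c).
Hypotheses (Hfc : forall x, 0 <= x -> continue_in f Defs.nonneg x)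
           (Hf0 : forall x, 0 <= x -> 0 <= f x).
Hypotheses (Hgc : forall x, 0 <= x -> continue_in g Defs.nonneg x)
           (Hg0 : forall x, 0 <= x -> 0 <= g x).
Hypotheses (Hwc : forall x, 0 <= x -> continue_in w Defs.nonneg x)
           (Hw0 : forall x, 0 <= x -> 0 <= w x)
           (Hwmono : nondecreasing_nonneg w) (Hwpos : forall x, 0 < x -> w x > 0).
Hypotheses (Ha0 : forall t, 0 <= t -> 0 <= alpha t)
           (Hale : forall t, 0 <= t -> alpha t <= t).
Hypotheses (Huc : forall x, 0 <= x -> continue_in u Defs.nonneg x)
           (Hu0 : forall x, 0 <= x -> 0 <= u x).

Definition kernel (s : R) : R := f s * rpow (u s) n * w (u s) + g s * rpow (u s) n.

Definition kernel_ext (x : R) : R :=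
  let P := ext0 (fun y => rpow y n) in
  ext0 f x * P (ext0 u x) * ext0 w (ext0 u x) + ext0 g x * P (ext0 u x).

Lemma kernel_ext_continuous : continuity kernel_ext.
Proof.
  assert (Cu := continuity_ext0 u Huc).
  assert (CP := continuity_ext0 _ (rpow_continue_in n Hn)).
  assert (CPu : continuity (fun x => ext0 (fun y => rpow y n) (ext0 u x)))
    by (intro x; exact (continuity_pt_comp _ _ x (Cu x) (CP _))).
  assert (Cwu : continuity (fun x => ext0 w (ext0 u x)))
    by (intro x; exact (continuity_pt_comp _ _ x (Cu x) (continuity_ext0 w Hwc _))).
  unfold kernel_ext. repeat apply continuity_plus || apply continuity_mult;
    auto using continuity_ext0.
Qed.

Lemma kernel_ext_eq (x : R) : 0 <= x -> kernel_ext x = kernel x.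
Proof.
  intros Hx. unfold kernel_ext, kernel.
  rewrite !(ext0_nonneg _ x Hx), !(ext0_nonneg _ (u x) (Hu0 x Hx)). reflexivity.
Qed.

Lemma kernel_ext_nonneg (x : R) : 0 <= kernel_ext x.
Proof.
  unfold kernel_ext, ext0.
  assert (Hx := Rmax_l 0 x). assert (Hux := Rmax_l 0 (u (Rmax 0 x))).
  assert (0 <= f (Rmax 0 x)) by auto. assert (0 <= g (Rmax 0 x)) by auto.
  assert (0 <= w (Rmax 0 (u (Rmax 0 x)))) by auto.
  assert (0 <= rpow (Rmax 0 (u (Rmax 0 x))) n) by apply rpow_nonneg.
  assert (0 <= f (Rmax 0 x) * rpow (Rmax 0 (u (Rmax 0 x))) n) by (apply Rmult_le_pos; auto).
  assert (0 <= g (Rmax 0 x) * rpow (Rmax 0 (u (Rmax 0 x))) n) by (apply Rmult_le_pos; auto).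
  assert (0 <= f (Rmax 0 x) * rpow (Rmax 0 (u (Rmax 0 x))) n * w (Rmax 0 (u (Rmax 0 x))))
    by (apply Rmult_le_pos; auto).
  lra.
Qed.

Definition Z (x : R) : R := Rpower c (m / (m - n)) + m / (m - n) * Rint kernel_ext 0 x.

Lemma Z_derivable (x : R) : derivable_pt_lim Z x (m / (m - n) * kernel_ext x).
Proof.
  unfold Z. replace (m / (m - n) * kernel_ext x) with (0 + m / (m - n) * kernel_ext x) by ring.
  apply derivable_pt_lim_plus; [apply derivable_pt_lim_const|].
  apply derivable_pt_lim_scal, Rint_derivable, kernel_ext_continuous.
Qed.

Lemma Z_nondecreasing (a b : R) : a <= b -> Z a <= Z b.
Proof.
  intros Hab. apply (nondecreasing_of_deriv Z (fun x => m / (m - n) * kernel_ext x)); auto.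
  - intros; apply Z_derivable.
  - intros z _. apply Rmult_le_pos; [left; apply Rdiv_lt_0_compat; lra|apply kernel_ext_nonneg].
Qed.

Lemma Z_pos (x : R) : 0 <= x -> 0 < Z x.
Proof.
  intros Hx. apply Rlt_le_trans with (Z 0); [|apply Z_nondecreasing; auto].
  unfold Z. rewrite Rint_zero_length by apply kernel_ext_continuous.
  rewrite Rmult_0_r, Rplus_0_r. apply Rpower_gt0.
Qed.

Hypothesis Hineq : forall t, 0 <= t ->
  rpow (u t) m <= Rpower c (m / (m - n)) + m / (m - n) * Rint kernel 0 (alpha t).

Lemma u_le_root_Z_alpha (t : R) : 0 <= t -> u t <= Rpower (Z (alpha t)) (1 / m).
Proof.
  intros Ht. apply rpow_root_bound; auto; [lra|apply Z_pos; auto|].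
  unfold Z. rewrite <- (Rint_eq_on kernel kernel_ext); auto using kernel_ext_continuous.
  intros s Hs. symmetry. apply kernel_ext_eq; lra.
Qed.

Lemma u_le_root_Z (t : R) : 0 <= t -> u t <= Rpower (Z t) (1 / m).
Proof.
  intros Ht. apply Rle_trans with (1 := u_le_root_Z_alpha t Ht).
  apply Rle_Rpower_l; [left; apply Rdiv_lt_0_compat; lra|].
  split; [apply Z_pos; auto|]. apply Z_nondecreasing; auto.
Qed.

Definition V (x : R) : R := Rpower (Z x) ((m - n) / m).

Definition V_slope (x : R) : R :=
  (m - n) / m * Rpower (Z x) ((m - n) / m - 1) * (m / (m - n) * kernel_ext x).

Lemma V_derivable (x : R) : 0 <= x -> derivable_pt_lim V x (V_slope x).
Proof.
  intros Hx. unfold V, V_slope.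
  apply (derivable_pt_lim_comp Z (fun z => Rpower z ((m - n) / m))).
  - apply Z_derivable.
  - apply derivable_pt_lim_power, Z_pos; auto.
Qed.

Lemma V_slope_bound (x : R) : 0 <= x ->
  V_slope x <= ext0 f x * w (rpow (V x) (1 / (m - n))) + ext0 g x.
Proof.
  intros Hx. unfold V, V_slope.
  assert (HZ := Z_pos x Hx).
  rewrite rpow_power_root, kernel_ext_eq, !ext0_nonneg by (auto; lra).
  replace ((m - n) / m * Rpower (Z x) ((m - n) / m - 1) * (m / (m - n) * kernel x))
    with (Rpower (Z x) (- (n / m)) * kernel x).
  - apply power_kernel_bound; auto.
    split; [apply Hu0; auto | apply u_le_root_Z; auto].
  - replace ((m - n) / m - 1) with (- (n / m)) by (field; lra). field; lra.
Qed.

Lemma Psi_V_bound (X : R) : 0 <= X ->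
  Psi m n w (V X) <= Psi m n w (c + Rint g 0 X) + Rint f 0 X.
Proof.
  intros HX.
  assert (HV0 : V 0 = c).
  { unfold V, Z. rewrite Rint_zero_length by apply kernel_ext_continuous.
    rewrite Rmult_0_r, Rplus_0_r. rewrite (Rpower_Rpower_exp _ _ _ 1) by (field; lra).
    apply Rpower_1; lra. }
  assert (Cf := continuity_ext0 f Hfc). assert (Cg := continuity_ext0 g Hgc).
  assert (H := Psi_comparison m n w Hwc Hwpos Hmn Hwmono V V_slope
                 (Rint (ext0 f) 0) (ext0 f) (Rint (ext0 g) 0) (ext0 g) 0 X HX).
  rewrite HV0, !Rint_zero_length, !Rminus_0_r, <- !Rint_ext0 in H by auto.
  apply H.
  - intros x Hx; apply V_derivable; lra.
  - intros x _; apply Rint_derivable; auto.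
  - intros x _; apply Rint_derivable; auto.
  - intros x Hx; apply Rpower_gt0.
  - intros x _; apply Hf0, Rmax_l.
  - intros x _; apply Hg0, Rmax_l.
  - intros x Hx; apply V_slope_bound; lra.
Qed.

Lemma comparison_bound (t : R) : 0 <= t ->
  exists y, 0 < y /\ u t <= rpow y (1 / (m - n)) /\
    Psi m n w y <= Psi m n w (c + Rint g 0 (alpha t)) + Rint f 0 (alpha t).
Proof.
  intros Ht. assert (HX := Ha0 t Ht).
  exists (V (alpha t)). split; [apply Rpower_gt0|]. split.
  - unfold V. rewrite rpow_power_root by (auto using Z_pos; lra).
    apply u_le_root_Z_alpha; auto.
  - apply Psi_V_bound; auto.
Qed.

End Corollary.

Theorem corollary1 (m n c : R) (f g w alpha u : R -> R)
  (Hmn : m > n) (Hn : n > 0) (Hc : c > 0)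
  (Hf : C_nonneg f) (Hg : C_nonneg g)
  (Hw : C_nonneg w) (Hwmono : nondecreasing_nonneg w)
  (Hwpos : forall x, 0 < x -> w x > 0)
  (Ha : C1_nonneg alpha) (Hamono : nondecreasing_nonneg alpha)
  (Hale : forall t, 0 <= t -> alpha t <= t)
  (Hu : C_nonneg u)
  (Hineq : forall t, 0 <= t ->
     rpow (u t) m <= Rpower c (m / (m - n))
       + m / (m - n) * Rint (fun s => f s * rpow (u s) n * w (u s)
                                      + g s * rpow (u s) n) 0 (alpha t)) :
  exists tau, tau > 0 /\
    forall t, 0 <= t <= tau ->
      PsiDom m n w (Psi m n w (c + Rint g 0 (alpha t)) + Rint f 0 (alpha t)) /\
      u t <= rpow (Psi_inv m n w (Psi m n w (c + Rint g 0 (alpha t))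
                                  + Rint f 0 (alpha t))) (1 / (m - n)).
Proof.
  destruct Hf as [Hfc Hf0], Hg as [Hgc Hg0], Hw as [Hwc Hw0], Hu as [Huc Hu0].
  destruct Ha as [[_ Ha0] _].
  (* Choose tau so that int_0^(alpha t) g < 1 and int_0^(alpha t) f stays below
     the gap Psi (c+2) - Psi (c+1); then the argument of Psi_inv is in its domain. *)
  set (gap := Psi m n w (c + 2) - Psi m n w (c + 1)).
  assert (Hgap : 0 < gap) by (apply Rlt_0_minus, Psi_strict; auto; lra).
  destruct (Rint_small_near_zero f gap Hfc Hf0 Hgap) as [d1 [Hd1 Hsmallf]].
  destruct (Rint_small_near_zero g 1 Hgc Hg0 Rlt_0_1) as [d2 [Hd2 Hsmallg]].
  exists (Rmin d1 d2). split; [apply Rmin_pos; auto|].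
  intros t Ht.
  assert (HX : 0 <= alpha t) by (apply Ha0; lra).
  assert (HXt := Hale t (proj1 Ht)).
  assert (H1 := Rmin_l d1 d2). assert (H2 := Rmin_r d1 d2).
  destruct (Hsmallf (alpha t)) as [HF0 HF]; [lra|].
  destruct (Hsmallg (alpha t)) as [HG0 HG]; [lra|].
  assert (Hdom : PsiDom m n w (Psi m n w (c + Rint g 0 (alpha t)) + Rint f 0 (alpha t))).
  { apply (PsiDom_of_gap m n w Hwc Hwpos _ (c + 2)); [lra|].
    assert (Psi m n w (c + Rint g 0 (alpha t)) <= Psi m n w (c + 1))
      by (apply Psi_le; auto; lra).
    unfold gap in HF. lra. }
  split; [exact Hdom|].
  destruct (comparison_bound m n c f g w alpha u Hmn Hn Hc Hfc Hf0 Hgc Hg0 Hwc Hw0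
              Hwmono Hwpos Ha0 Hale Huc Hu0 Hineq t (proj1 Ht)) as [y [Hy [Huy HPsi]]].
  apply Rle_trans with (1 := Huy).
  apply rpow_le_compat; [|left; apply Rdiv_lt_0_compat; lra].
  split; [lra|]. apply (Psi_inv_ge m n w Hwc Hwpos); auto.
Qed.
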